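(* Let $\lambda_0,\dots,\lambda_n,\eta_n\in\mathbb{C}$, $a\neq b$ real, and suppose $E_{(\lambda_0,\dots,\lambda_{n-1},\lambda_n)}$, $E_{(\lambda_0,\dots,\lambda_{n-1},\eta_n)}$ and $E_{(\lambda_0,\dots,\lambda_{n-1})}$ are extended Chebyshev systems for $\{a,b\}$. If for some $k\in\{0,\dots,n\}$ one has $p_{(\lambda_0,\dots,\lambda_{n-1},\lambda_n),k}(x)=p_{(\lambda_0,\dots,\lambda_{n-1},\eta_n),k}(x)$ for all $x\in(a,b)$, then $\lambda_n=\eta_n$. (Since the spaces do not depend on the ordering of the eigenvalues, the same holds with $\lambda_n$ replaced by any other eigenvalue.)
   Context: $E_{(\lambda_0,\dots,\lambda_m)}$ denotes the space of all $f\in C^\infty(\mathbb{R},\mathbb{C})$ with $(\frac{d}{dx}-\lambda_0)\cdots(\frac{d}{dx}-\lambda_m)f=0$ (dimension $m+1$, independent of the ordering of the $\lambda_j$). A zero of order (exactly) $k$ at $a$ means $f(a)=\dots=f^{(k-1)}(a)=0$, $f^{(k)}(a)\neq0$. $E_{(\lambda_0,\dots,\lambda_m)}$ is an extended Chebyshev system for $A\subset\mathbb{R}$ if every nonzero element has at most $m$ zeros in $A$ counted with multiplicity. In that case, for $A=\{a,b\}$, $a\ne b$, the Bernstein basis $p_{(\lambda_0,\dots,\lambda_m),k}$, $k=0,\dots,m$, is the unique family in $E_{(\lambda_0,\dots,\lambda_m)}$ with $p_{(\lambda_0,\dots,\lambda_m),k}$ having a zero of order exactly $k$ at $a$ and exactly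 $m-k$ at $b$, and $p^{(k)}_{(\lambda_0,\dots,\lambda_m),k}(a)=1$. *)

From Stdlib Require Import Reals List.
Open Scope R_scope.

Definition Cx := (R * R)%type.
Definition Cadd (z w : Cx) : Cx := (fst z + fst w, snd z + snd w).
Definition Csub (z w : Cx) : Cx := (fst z - fst w, snd z - snd w).
Definition Cmul (z w : Cx) : Cx :=
  (fst z * fst w - snd z * snd w, fst z * snd w + snd z * fst w).
Definition C0 : Cx := (0, 0).
Definition C1 : Cx := (1, 0).

Definition cderiv_lim (f : R -> Cx) (x : R) (l : Cx) : Prop :=
  derivable_pt_lim (fun t => fst (f t)) x (fst l) /\
  derivable_pt_lim (fun t => snd (f t)) x (snd l).

(* A derivative tower: F k is the k-th derivative of F 0 on all of R.
   F 0 is then C^infinity, and F is uniquely determined by F 0. *)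
Definition is_tower (F : nat -> R -> Cx) : Prop :=
  forall k x, cderiv_lim (F k) x (F (S k) x).

(* (d/dx - lam) applied to a tower, giving the tower of the result. *)
Definition opTower (lam : Cx) (F : nat -> R -> Cx) : nat -> R -> Cx :=
  fun k x => Csub (F (S k) x) (Cmul lam (F k x)).

Definition applyOps (l : list Cx) (F : nat -> R -> Cx) : nat -> R -> Cx :=
  fold_right opTower F l.

(* F 0 belongs to E_l (F is its tower of derivatives). *)
Definition inE (l : list Cx) (F : nat -> R -> Cx) : Prop :=
  is_tower F /\ forall x, applyOps l F 0%nat x = C0.

(* E_l (l = (lambda_0,...,lambda_m), length m+1) is an extended Chebyshev
   system for {a,b}: every nonzero element has at most m zeros in {a,b}
   counted with multiplicity. *)
Definition ECT_ab (l : list Cx) (a b : R) : Prop :=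
  forall F, inE l F -> (exists x, F 0%nat x <> C0) ->
  forall ka kb : nat,
    (forall i, (i < ka)%nat -> F i a = C0) ->
    (forall i, (i < kb)%nat -> F i b = C0) ->
    (ka + kb < length l)%nat.

(* F 0 is the Bernstein basis element p_{l,k} for {a,b}, m = length l - 1:
   zero of order exactly k at a, exactly m-k at b, and p^(k)(a) = 1. *)
Definition is_bernstein (l : list Cx) (a b : R) (k : nat)
    (F : nat -> R -> Cx) : Prop :=
  inE l F /\
  (forall i, (i < k)%nat -> F i a = C0) /\ F k a = C1 /\
  (forall i, (i < length l - 1 - k)%nat -> F i b = C0) /\
  F (length l - 1 - k)%nat b <> C0.

From Stdlib Require Import Reals Lra Lia List Classical.
Open Scope R_scope.

(* Put n = length lams and let g := (D - l_0)...(D - l_{n-1}) P,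
   h := (D - l_0)...(D - l_{n-1}) Q.  Because the differential operators
   commute, P in E_(lams, lamn) means g' = lamn g, and likewise h' = etan h.
   Since P = Q on the open interval (min a b, max a b), all their derivatives
   agree there, hence g = h and g' = h' there.
   - If g(t) <> 0 for some t in the interval, then lamn g(t) = etan g(t)
     and we cancel g(t).
   - Otherwise g vanishes on an interval; as a solution of g' = lamn g it
     then vanishes everywhere (the weighted energy exp(-2 Re(lamn) t)|g t|^2
     is constant).  So P lies in E_lams, a space that is an extended
     Chebyshev system with only n - 1 admissible zeros, while the nonzero
     Bernstein function P has k zeros at a and n - k zeros at b. *)

(* Derivative rules with the value of the derivative left as an equation,
   so that they apply to goals whose derivative is not syntactically in
   the library's normal form. *)
Lemma deriv_plus f g x l1 l2 l : derivable_pt_lim f x l1 -> derivable_pt_lim g x l2 ->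
  l = l1 + l2 -> derivable_pt_lim (fun t => f t + g t) x l.
Proof. intros H1 H2 ->; exact (derivable_pt_lim_plus f g x l1 l2 H1 H2). Qed.

Lemma deriv_minus f g x l1 l2 l : derivable_pt_lim f x l1 -> derivable_pt_lim g x l2 ->
  l = l1 - l2 -> derivable_pt_lim (fun t => f t - g t) x l.
Proof. intros H1 H2 ->; exact (derivable_pt_lim_minus f g x l1 l2 H1 H2). Qed.

Lemma deriv_mult f g x l1 l2 l : derivable_pt_lim f x l1 -> derivable_pt_lim g x l2 ->
  l = l1 * g x + f x * l2 -> derivable_pt_lim (fun t => f t * g t) x l.
Proof. intros H1 H2 ->; exact (derivable_pt_lim_mult f g x l1 l2 H1 H2). Qed.

Lemma deriv_scal f c x l1 l : derivable_pt_lim f x l1 ->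
  l = c * l1 -> derivable_pt_lim (fun t => c * f t) x l.
Proof. intros H1 ->; exact (derivable_pt_lim_scal f c x l1 H1). Qed.

Lemma deriv_exp_lin c x : derivable_pt_lim (fun t => exp (c * t)) x (c * exp (c * x)).
Proof.
  rewrite Rmult_comm.
  apply (derivable_pt_lim_comp (fun t => c * t) exp x c (exp (c * x))).
  - apply deriv_scal with 1; [apply derivable_pt_lim_id | ring].
  - apply derivable_pt_lim_exp.
Qed.

Lemma Cx_eq (z w : Cx) : fst z = fst w -> snd z = snd w -> z = w.
Proof. destruct z, w; simpl; intros -> ->; reflexivity. Qed.

Lemma Cmul_cancel_r (z z' w : Cx) : Cmul z w = Cmul z' w -> w <> C0 -> z = z'.
Proof.
  destruct z as [z1 z2], z' as [y1 y2], w as [w1 w2]; unfold Cmul, C0; simpl.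
  intros E Hw. injection E as E1 E2.
  assert (Hn : w1 * w1 + w2 * w2 <> 0).
  { intro N. apply Hw.
    assert (S1 : w1 * w1 = 0) by nra. assert (S2 : w2 * w2 = 0) by nra.
    apply Rmult_integral in S1, S2. f_equal; tauto. }
  f_equal; apply (Rmult_eq_reg_r (w1 * w1 + w2 * w2)); auto.
  - replace (z1 * _) with (w1 * (z1 * w1 - z2 * w2) + w2 * (z1 * w2 + z2 * w1)) by ring.
    rewrite E1, E2; ring.
  - replace (z2 * _) with (w1 * (z1 * w2 + z2 * w1) - w2 * (z1 * w1 - z2 * w2)) by ring.
    rewrite E1, E2; ring.
Qed.

Lemma cderiv_lim_unique f x l l' : cderiv_lim f x l -> cderiv_lim f x l' -> l = l'.
Proof.
  intros [H1 H2] [H1' H2'].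
  apply Cx_eq; eapply uniqueness_limite; eassumption.
Qed.

Lemma cderiv_lim_locally_ext f g x c d l : c < x < d ->
  (forall t, c < t < d -> f t = g t) -> cderiv_lim f x l -> cderiv_lim g x l.
Proof.
  intros Hx E [H1 H2]; split.
  - apply (derivable_pt_lim_locally_ext (fun t => fst (f t)) _ x c d (fst l) Hx); auto.
    intros t Ht; rewrite (E t Ht); reflexivity.
  - apply (derivable_pt_lim_locally_ext (fun t => snd (f t)) _ x c d (snd l) Hx); auto.
    intros t Ht; rewrite (E t Ht); reflexivity.
Qed.

Lemma tower_agree F G c d : is_tower F -> is_tower G ->
  (forall t, c < t < d -> F 0%nat t = G 0%nat t) ->
  forall k t, c < t < d -> F k t = G k t.
Proof.
  intros HF HG H0 k; induction k as [|k IH]; [exact H0|].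
  intros t Ht.
  apply (cderiv_lim_unique (G k) t).
  - exact (cderiv_lim_locally_ext _ _ t c d _ Ht IH (HF k t)).
  - exact (HG k t).
Qed.

Lemma zero_tower : is_tower (fun _ _ => C0).
Proof. intros k x; split; apply (derivable_pt_lim_const 0 x). Qed.

Lemma tower_zero F : is_tower F -> (forall x, F 0%nat x = C0) -> forall k x, F k x = C0.
Proof.
  intros HF H k x.
  apply (tower_agree F (fun _ _ => C0) (x - 1) (x + 1) HF zero_tower); [intros; apply H | lra].
Qed.

(* A solution of f' = lam f vanishing on a nontrivial interval vanishes
   everywhere: the energy exp(-2 Re(lam) t) |f t|^2 has zero derivative,
   hence is constant, and it is zero inside the interval. *)
Lemma linear_ode_zero f lam c d : c < d ->
  (forall x, cderiv_lim f x (Cmul lam (f x))) ->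
  (forall t, c < t < d -> f t = C0) -> forall x, f x = C0.
Proof.
  intros Hcd Hf Hz.
  set (al := fst lam).
  set (w := fun t => exp (-2 * al * t) * (fst (f t) * fst (f t) + snd (f t) * snd (f t))).
  assert (Hw : forall x, derivable_pt_lim w x 0).
  { intro x. destruct (Hf x) as [D1 D2]. unfold Cmul in D1, D2; simpl in D1, D2.
    eapply deriv_mult; [apply deriv_exp_lin | |].
    - eapply deriv_plus; [eapply deriv_mult; eauto | eapply deriv_mult; eauto | reflexivity].
    - unfold al; ring. }
  set (pr := fun x => exist (fun l => derivable_pt_lim w x l) 0 (Hw x) : derivable_pt w x).
  assert (Wconst : forall x y, w x = w y) by exact (null_derivative_1 w pr (fun _ => eq_refl)).
  intro x. set (t0 := (c + d) / 2).
  assert (W0 : w t0 = 0).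
  { unfold w. rewrite (Hz t0) by (unfold t0; lra). simpl; ring. }
  assert (Wx : fst (f x) * fst (f x) + snd (f x) * snd (f x) = 0).
  { apply Rmult_eq_reg_l with (exp (-2 * al * x)); [| apply Rgt_not_eq, exp_pos].
    rewrite Rmult_0_r. change (w x = 0). rewrite <- W0; apply Wconst. }
  apply Cx_eq; simpl; nra.
Qed.

Lemma applyOps_pointwise l F G x : (forall j, F j x = G j x) ->
  forall j, applyOps l F j x = applyOps l G j x.
Proof.
  intro H; induction l as [|lam l IH]; intro j; simpl; [apply H|].
  unfold opTower; rewrite !IH; reflexivity.
Qed.

Lemma opTower_tower lam F : is_tower F -> is_tower (opTower lam F).
Proof.
  intros HF k x. destruct (HF k x) as [A1 A2], (HF (S k) x) as [B1 B2].
  unfold opTower, Csub, Cmul; split; simpl.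
  - eapply deriv_minus; [exact B1 | eapply deriv_minus | reflexivity];
      [eapply deriv_scal; [exact A1 | reflexivity]
      | eapply deriv_scal; [exact A2 | reflexivity] | reflexivity].
  - eapply deriv_minus; [exact B2 | eapply deriv_plus | reflexivity];
      [eapply deriv_scal; [exact A2 | reflexivity]
      | eapply deriv_scal; [exact A1 | reflexivity] | reflexivity].
Qed.

Lemma applyOps_tower l F : is_tower F -> is_tower (applyOps l F).
Proof. intro H; induction l; simpl; auto using opTower_tower. Qed.

Lemma opTower_comm lam mu F k x :
  opTower mu (opTower lam F) k x = opTower lam (opTower mu F) k x.
Proof. unfold opTower, Csub, Cmul; apply Cx_eq; simpl; ring. Qed.

Lemma applyOps_snoc l lam F : forall k x,
  applyOps (l ++ lam :: nil) F k x = opTower lam (applyOps l F) k x.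
Proof.
  induction l as [|mu l IH]; intros k x; simpl; [reflexivity|].
  change (opTower mu (applyOps (l ++ lam :: nil) F) k x
          = opTower lam (opTower mu (applyOps l F)) k x).
  rewrite <- opTower_comm; unfold opTower at 1 3; rewrite !IH; reflexivity.
Qed.

Lemma inE_snoc_eigen l lam P : inE (l ++ lam :: nil) P ->
  forall x, applyOps l P 1%nat x = Cmul lam (applyOps l P 0%nat x).
Proof.
  intros [_ H] x. specialize (H x). rewrite applyOps_snoc in H. unfold opTower in H.
  revert H. generalize (applyOps l P 1%nat x) (Cmul lam (applyOps l P 0%nat x)).
  intros [u1 u2] [v1 v2]; unfold Csub, C0; simpl; intro H. injection H as H1 H2.
  f_equal; lra.
Qed.

(* A Bernstein function of E_(l, lam) cannot lie in E_l when E_l is an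
   extended Chebyshev system: it is nonzero (its k-th derivative at a is 1)
   and has length l zeros in {a, b}. *)
Lemma bernstein_notin_smaller l lam a b k P : (k <= length l)%nat ->
  ECT_ab l a b -> is_bernstein (l ++ lam :: nil) a b k P -> ~ inE l P.
Proof.
  intros Hk Hect [[TP _] [Ha [Hk1 [Hb _]]]] HPl.
  assert (NZ : exists x, P 0%nat x <> C0).
  { apply NNPP; intro N.
    assert (Z := tower_zero P TP (fun x => NNPP _ (fun Hx => N (ex_intro _ x Hx))) k a).
    rewrite Hk1 in Z. unfold C1, C0 in Z. injection Z; lra. }
  rewrite length_app in Hb; simpl in Hb.
  replace (length l + 1 - 1 - k)%nat with (length l - k)%nat in Hb by lia.
  specialize (Hect P HPl NZ k (length l - k)%nat Ha Hb). lia.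
Qed.

Theorem mainTheorem9 (lams : list Cx) (lamn etan : Cx) (a b : R) :
  a <> b ->
  ECT_ab (lams ++ lamn :: nil) a b ->
  ECT_ab (lams ++ etan :: nil) a b ->
  ECT_ab lams a b ->
  forall (k : nat), (k <= length lams)%nat ->
  forall (P Q : nat -> R -> Cx),
    is_bernstein (lams ++ lamn :: nil) a b k P ->
    is_bernstein (lams ++ etan :: nil) a b k Q ->
    (forall x, Rmin a b < x < Rmax a b -> P 0%nat x = Q 0%nat x) ->
    lamn = etan.
Proof.
  intros Hab _ _ Hect k Hk P Q HP HQ HPQ.
  set (c := Rmin a b); set (d := Rmax a b).
  assert (Hcd : c < d) by (unfold c, d, Rmin, Rmax; destruct (Rle_dec a b); lra).
  assert (HPe : inE (lams ++ lamn :: nil) P) by apply HP.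
  assert (HQe : inE (lams ++ etan :: nil) Q) by apply HQ.
  set (g := applyOps lams P); set (h := applyOps lams Q).
  assert (Eg := inE_snoc_eigen _ _ _ HPe); assert (Eh := inE_snoc_eigen _ _ _ HQe).
  fold g in Eg; fold h in Eh.
  assert (Tg : is_tower g) by (apply applyOps_tower, HPe).
  assert (Agree : forall j t, c < t < d -> g j t = h j t).
  { intros j t Ht; apply applyOps_pointwise; intro i.
    exact (tower_agree P Q c d (proj1 HPe) (proj1 HQe) HPQ i t Ht). }
  destruct (classic (exists t, c < t < d /\ g 0%nat t <> C0)) as [[t [Ht Hg]] | Hno].
  - apply (Cmul_cancel_r _ _ (g 0%nat t)); [| exact Hg].
    rewrite <- Eg, (Agree 1%nat t Ht), Eh, <- (Agree 0%nat t Ht); reflexivity.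
  - exfalso; apply (bernstein_notin_smaller lams lamn a b k P Hk Hect HP).
    split; [apply HPe|].
    apply (linear_ode_zero (g 0%nat) lamn c d Hcd).
    + intro x; rewrite <- Eg; apply Tg.
    + intros t Ht; apply NNPP; intro N; apply Hno; eauto.
Qed.
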